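(* Let $d,k\ge 1$ and let $F=\{F^{(1)},\ldots,F^{(k)}\}$ be an SNRE of degree $(d,k)$, with associated sequences $(\gamma_{i;n})_{n\ge 0}$, $1\le i\le k$. Let $i,j\in\{1,\dots,k\}$. If the symbol $j$ is essential and $i$ induces $j$ (i.e. $i\to j$), then $i$ is essential.
   Context: An SNRE (system of nonlinear recursive equations) of degree $(d,k)$ consists of $k$ nonzero homogeneous polynomials $F^{(1)},\ldots,F^{(k)}$ of degree $d$ in $k$ variables $x_1,\dots,x_k$ with nonnegative integer coefficients, together with the sequences defined by $\gamma_{i;0}=1$ and $\gamma_{i;n}=F^{(i)}(\gamma_{1;n-1},\ldots,\gamma_{k;n-1})$ for $n\ge 1$, $1\le i\le k$ (so all $\gamma_{i;n}$ are positive integers). The symbol $i$ induces $j$, written $i\to j$, if the variable $x_j$ occurs in some monomial of $F^{(i)}$ having nonzero coefficient. A symbol $i$ is essential if $\gamma_{i;n}\ge 2$ for some $n\in\mathbb{N}$, and inessential otherwise (i.e. $\gamma_{i;n}=1$ for all $n$). *)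

From mathcomp Require Import all_boot.
Set Implicit Arguments. Unset Strict Implicit. Unset Printing Implicit Defensive.

(* A monomial in k variables of degree <= d is an exponent vector
   'I_k -> 'I_d.+1 ; a polynomial with nonnegative integer coefficients of
   degree <= d is a coefficient function on such monomials. *)
Definition monom (k d : nat) := {ffun 'I_k -> 'I_d.+1}.
Definition npoly (k d : nat) := monom k d -> nat.

Definition mdeg k d (m : monom k d) : nat := \sum_(j < k) (m j : nat).

Definition homog k d (P : npoly k d) : Prop :=
  forall m, P m <> 0 -> mdeg m = d.

Definition nonzero_poly k d (P : npoly k d) : Prop := exists m, P m <> 0.

Definition peval k d (P : npoly k d) (x : 'I_k -> nat) : nat :=
  \sum_(m : monom k d) P m * \prod_(j < k) x j ^ (m j).

Definition is_SNRE k d (F : 'I_k -> npoly k d) : Prop :=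
  forall i, nonzero_poly (F i) /\ homog (F i).

(* gamma F n i = gamma_{i;n} *)
Fixpoint gamma k d (F : 'I_k -> npoly k d) (n : nat) : 'I_k -> nat :=
  match n with
  | 0 => fun _ => 1
  | n'.+1 => fun i => peval (F i) (gamma F n')
  end.

Definition induces k d (F : 'I_k -> npoly k d) (i j : 'I_k) : Prop :=
  exists m, F i m <> 0 /\ 0 < (m j : nat).

Definition essential k d (F : 'I_k -> npoly k d) (i : 'I_k) : Prop :=
  exists n, 2 <= gamma F n i.

From mathcomp Require Import all_boot.

Set Implicit Arguments.
Unset Strict Implicit.

(* All [gamma] values are positive, so every factor of a monomial is at least
   1; hence if [x_j] occurs in a monomial of [F^(i)], then
   [gamma_{i;n+1} >= gamma_{j;n}], and essentiality propagates from [j] to [i]. *)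

Lemma leq_term_peval k d (P : npoly k d) (x : 'I_k -> nat) (m : monom k d) :
  P m * \prod_(j < k) x j ^ m j <= peval P x.
Proof. by rewrite /peval (bigD1 m) //= leq_addr. Qed.

Lemma leq_exp_prod (I : finType) (x e : I -> nat) (j : I) :
  (forall l, 0 < x l) -> x j ^ e j <= \prod_l x l ^ e l.
Proof.
move=> x_gt0; rewrite (bigD1 j) //= -{1}[x j ^ e j]muln1 leq_mul2l.
by rewrite prodn_gt0 ?orbT // => l; rewrite expn_gt0 x_gt0.
Qed.

Lemma peval_gt0 k d (P : npoly k d) (x : 'I_k -> nat) :
  nonzero_poly P -> (forall j, 0 < x j) -> 0 < peval P x.
Proof.
move=> [m /eqP Pm_neq0] x_gt0; apply: leq_trans (leq_term_peval P x m).
by rewrite muln_gt0 lt0n Pm_neq0 prodn_gt0 // => j; rewrite expn_gt0 x_gt0.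
Qed.

Lemma gamma_gt0 k d (F : 'I_k -> npoly k d) :
  (forall i, nonzero_poly (F i)) -> forall n i, 0 < gamma F n i.
Proof. by move=> F_neq0; elim=> [|n IHn] i //=; apply: peval_gt0. Qed.

Lemma leq_gamma_induces k d (F : 'I_k -> npoly k d) (i j : 'I_k) n :
  (forall l, nonzero_poly (F l)) -> induces F i j ->
  gamma F n j <= gamma F n.+1 i.
Proof.
move=> F_neq0 [m [/eqP Fim_neq0 mj_gt0]] /=.
have gamma_n_gt0 := gamma_gt0 F_neq0 n.
apply: leq_trans (leq_term_peval _ _ m).
apply: leq_trans (leq_pmull _ _); last by rewrite lt0n.
apply: leq_trans (leq_exp_prod _ _ gamma_n_gt0).
by rewrite -{1}[gamma F n j]expn1; apply: leq_pexp2l.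
Qed.

Theorem lemma1 (d k : nat) (F : 'I_k -> npoly k d) (i j : 'I_k) :
  1 <= d -> 1 <= k -> is_SNRE F ->
  essential F j -> induces F i j -> essential F i.
Proof.
move=> _ _ F_SNRE [n gamma_j_ge2] ij.
have F_neq0 l : nonzero_poly (F l) := (F_SNRE l).1.
by exists n.+1; apply: leq_trans gamma_j_ge2 (leq_gamma_induces n F_neq0 ij).
Qed.
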